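(* Let $\mathbb{F}$ be a field of characteristic $p$, let $\mathbb{E}$ be an extension field and let $M\le\mathbb{E}^*$ be a subgroup of order $m=r^e$ with $r$ prime and $e\ge1$. Then there is no polynomial $f\in\mathbb{F}[x]$ such that $M$ is an automatically non-standard $f$-subgroup. In particular, there is no enumeration $s_0,\ldots,s_{m-1}$ of $M$ for which $\phi_{p,m}(x)$ divides $s_0x^{m-1}+s_1x^{m-2}+\cdots+s_{m-1}$.
   Context: $\phi_{p,m}$ is the $m$th cyclotomic polynomial reduced mod $p$ (if $p>0$); when $\gcd(m,p)=1$ its zeros are the primitive $m$th roots of unity. An $f$-sequence is a two-way infinite sequence with $f(\sigma)s=0$, $(\sigma s)_n=s_{n+1}$. For $m>1$ with $\gcd(m,p)=1$ if $p>0$: if $f$ divides $(x^m-1)/((x-1)\phi_{p,m}(x))$ and an $f$-sequence $s$ of period $m$ (over an extension of $\mathbb{F}$) has $M=\{s_0,\ldots,s_{m-1}\}$ a subgroup of size $m$, then $M$ is called an automatically non-standard $f$-subgroup. *)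

From HB Require Import structures.
From mathcomp Require Import all_boot all_order all_algebra all_field.
Set Implicit Arguments. Unset Strict Implicit. Unset Printing Implicit Defensive.
Import Order.TTheory GRing.Theory Num.Theory.
Local Open Scope ring_scope.

Definition is_char (F : fieldType) (p : nat) : Prop :=
  forall q : nat, (q%:R == 0 :> F) = (p %| q)%N.

(* phi_{p,m}: the m-th (integral) cyclotomic polynomial reduced into the
   ring R (whose characteristic is p, so this is the reduction mod p). *)
Definition phi_pm (R : nzRingType) (m : nat) : {poly R} :=
  map_poly (fun z : int => z%:~R) 'Phi_m.

Definition units_subgroup (E : fieldType) (M : seq E) : Prop :=
  [/\ uniq M, 1 \in M,
      (forall x, x \in M -> x != 0),
      (forall x y, x \in M -> y \in M -> x * y \in M) &
      (forall x, x \in M -> x^-1 \in M)].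

(* s is an f-sequence (f(sigma) s = 0, (sigma s)_n = s_{n+1}), coefficients of
   f being transported into E along emb. *)
Definition f_sequence (F E : fieldType) (emb : {rmorphism F -> E})
  (f : {poly F}) (s : int -> E) : Prop :=
  forall n : int, \sum_(i < size f) emb f`_i * s (n + i%:Z) = 0.

Definition has_period (E : Type) (s : int -> E) (m : nat) : Prop :=
  forall n : int, s (n + m%:Z) = s n.

Definition auto_nonstandard (F E : fieldType) (emb : {rmorphism F -> E})
  (p : nat) (f : {poly F}) (M : seq E) : Prop :=
  let m := size M in
  [/\ (1 < m)%N,
      (0 < p)%N -> coprime m p,
      f %| ('X^m - 1) %/ (('X - 1) * phi_pm F m),
      units_subgroup M &
      exists s : int -> E,
        [/\ f_sequence emb f s, has_period s m &
            perm_eq [seq s (i%:Z) | i <- iota 0 m] M]].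

From HB Require Import structures.
From mathcomp Require Import all_boot all_order all_algebra all_field.
From mathcomp Require Import zify ring.
Set Implicit Arguments. Unset Strict Implicit. Unset Printing Implicit Defensive.
Import Order.TTheory GRing.Theory Num.Theory.
Local Open Scope ring_scope.

(* For a prime power m = r^e put k = r^(e-1).  Among the divisors of m only m
   itself fails to divide k, so the factorisation of 'X^n - 1 into cyclotomic
   polynomials gives  'X^m - 1 = ('X^k - 1) * Phi_m,  in every ring.  Both
   halves of the theorem turn this identity into k-periodicity, which is
   impossible for an enumeration of m distinct elements since 0 < k < m:
   - an f-sequence is annihilated by every multiple of f (the annihilator of
     a sequence is an ideal, X acting as the shift); here
     ('X^m - 1) %/ (('X - 1) * Phi_m) = 1 + X + ... + X^(k-1) is such a
     multiple, and a sequence annihilated by it has period k;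
   - a polynomial of size at most m divisible by ('X^m - 1) / ('X^k - 1) has
     k-periodic coefficients, by comparing coefficients in
     g * ('X^k - 1) = q * ('X^m - 1); the reversed polynomial
     s_0 X^(m-1) + ... + s_(m-1) would thus repeat an entry. *)

Lemma prime_power_new_divisor (r e d : nat) : prime r -> (0 < e)%N ->
  (d %| r ^ e)%N && ~~ (d %| r ^ e.-1)%N = (d == r ^ e)%N.
Proof.
move=> r_pr e_gt0; have r_gt1 := prime_gt1 r_pr.
apply/idP/eqP => [/andP[/(dvdn_pfactor _ _ r_pr)[j j_le ->]] | ->].
  by rewrite dvdn_Pexp2l // => j_gt; have -> : j = e by lia.
by rewrite dvdnn dvdn_Pexp2l //=; lia.
Qed.

Lemma Xn_sub_1_divisor_split (n k : nat) : (0 < n)%N -> (k %| n)%N ->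
  ('X^n - 1 : {poly int}) =
    ('X^k - 1) * \prod_(d <- divisors n | ~~ (d %| k)%N) 'Phi_d.
Proof.
move=> n_gt0 k_dvd_n; have k_gt0 : (0 < k)%N by apply: dvdn_gt0 n_gt0 k_dvd_n.
rewrite -(prod_Cyclotomic n_gt0) -(prod_Cyclotomic k_gt0).
rewrite (bigID (fun d => d %| k)%N) /=; congr (_ * _).
rewrite -big_filter; apply: perm_big; apply: uniq_perm.
- by rewrite filter_uniq // divisors_uniq.
- by rewrite divisors_uniq.
move=> d; rewrite mem_filter -!dvdn_divisors //.
by apply/andb_idr => /dvdn_trans; apply.
Qed.

Lemma Xn_sub_1_prime_power (R : nzRingType) (r e : nat) :
  prime r -> (0 < e)%N ->
  ('X^(r ^ e) - 1 : {poly R}) = ('X^(r ^ e.-1) - 1) * phi_pm R (r ^ e).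
Proof.
move=> r_pr e_gt0; have r_gt0 := prime_gt0 r_pr.
have split_int : ('X^(r ^ e) - 1 : {poly int}) = ('X^(r ^ e.-1) - 1) * 'Phi_(r ^ e).
  rewrite (@Xn_sub_1_divisor_split _ (r ^ e.-1)) ?expn_gt0 ?r_gt0 //; last first.
    by rewrite dvdn_exp2l // leq_pred.
  congr (_ * _); rewrite big_seq_cond (eq_bigl (pred1 (r ^ e)%N)) => [|d /=].
    rewrite -big_filter filter_pred1_uniq ?divisors_uniq ?big_seq1 //.
    by rewrite divisors_id ?expn_gt0 ?r_gt0.
  by rewrite -dvdn_divisors ?expn_gt0 ?r_gt0 ?prime_power_new_divisor.
have := congr1 (map_poly (fun z : int => z%:~R : R)) split_int.
by rewrite rmorphM !rmorphB /= !map_polyXn !rmorph1.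
Qed.

Lemma Xn_sub_1_geometric (R : comNzRingType) (k : nat) :
  ('X^k - 1 : {poly R}) = ('X - 1) * \poly_(i < k) 1.
Proof.
rewrite poly_def; elim: k => [|k IH]; first by rewrite big_ord0 expr0 subrr mulr0.
by rewrite big_ord_recr /= mulrDr -IH scale1r exprS; ring.
Qed.

Lemma repunit_quotient (R : fieldType) (r e : nat) : prime r -> (0 < e)%N ->
  ('X^(r ^ e) - 1) %/ (('X - 1) * phi_pm R (r ^ e)) = \poly_(i < r ^ e.-1) 1.
Proof.
move=> r_pr e_gt0.
have factor : ('X^(r ^ e) - 1 : {poly R}) =
    \poly_(i < r ^ e.-1) 1 * (('X - 1) * phi_pm R (r ^ e)).
  by rewrite Xn_sub_1_prime_power // Xn_sub_1_geometric mulrCA mulrA.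
rewrite [in LHS]factor mulpK //; apply/eqP => divisor0.
move/(congr1 (size : {poly R} -> nat)): factor.
by rewrite divisor0 mulr0 size_poly0 -polyC1 size_XnsubC // expn_gt0 prime_gt0.
Qed.

Section ShiftOperator.
Variables (F E : fieldType) (emb : {rmorphism F -> E}) (s : int -> E).

(* (P(sigma) s)_n, sigma being the shift (sigma s)_n = s_(n+1); thus s is an
   f-sequence exactly when poly_shift f n = 0 for all n. *)
Definition poly_shift (P : {poly F}) (n : int) : E :=
  \sum_(i < size P) emb P`_i * s (n + i%:Z).

Lemma poly_shift_widen (P : {poly F}) (N : nat) (n : int) : (size P <= N)%N ->
  \sum_(i < N) emb P`_i * s (n + i%:Z) = poly_shift P n.
Proof.
move=> P_le; rewrite /poly_shift.
rewrite (big_ord_widen _ (fun i : nat => emb P`_i * s (n + i%:Z)) P_le) [RHS]big_mkcond.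
apply: eq_bigr => i _; case: ltnP => // /(nth_default 0) ->.
by rewrite rmorph0 mul0r.
Qed.

Lemma poly_shiftD (P Q : {poly F}) (n : int) :
  poly_shift (P + Q) n = poly_shift P n + poly_shift Q n.
Proof.
have sizePQ := size_polyD P Q.
rewrite -!(@poly_shift_widen _ (maxn (size P) (size Q))) ?leq_maxl ?leq_maxr //.
by rewrite -big_split; apply: eq_bigr => i _; rewrite coefD rmorphD mulrDl.
Qed.

Lemma poly_shiftZ (c : F) (P : {poly F}) (n : int) :
  poly_shift (c *: P) n = emb c * poly_shift P n.
Proof.
rewrite -(poly_shift_widen n (size_scale_leq c P)) mulr_sumr.
by apply: eq_bigr => i _; rewrite coefZ rmorphM mulrA.
Qed.

Lemma poly_shiftMX (P : {poly F}) (n : int) :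
  poly_shift (P * 'X) n = poly_shift P (n + 1).
Proof.
have size_PX : (size (P * 'X)%R <= (size P).+1)%N.
  by apply: leq_trans (size_polyMleq _ _) _; rewrite size_polyX addn2.
rewrite -(poly_shift_widen n size_PX) big_ord_recl coefMX rmorph0 mul0r add0r.
apply: eq_bigr => i _; rewrite coefMX /=; congr (_ * s _).
by rewrite /bump leq0n intS addrA.
Qed.

(* The annihilator of s is an ideal: every multiple of f kills an
   f-sequence. *)
Lemma f_sequence_dvd (f g : {poly F}) :
  f_sequence emb f s -> f %| g -> f_sequence emb g s.
Proof.
move=> f_ann /dvdpP[q ->]; elim/poly_ind: q => [|q c IH] n.
  by rewrite mul0r /f_sequence size_poly0 big_ord0.
rewrite mulrDl -mulrA (mulrC 'X) mulrA mul_polyC.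
rewrite [LHS]poly_shiftD poly_shiftZ poly_shiftMX.
by rewrite /poly_shift IH f_ann mulr0 addr0.
Qed.

Lemma repunit_period (k : nat) :
  f_sequence emb (\poly_(i < k) 1) s -> forall n : int, s (n + k%:Z) = s n.
Proof.
move=> ann n.
have window0 (j : int) : \sum_(i < k) s (j + i%:Z) = 0.
  transitivity (poly_shift (\poly_(i < k) 1) j); last exact: ann j.
  rewrite -(poly_shift_widen j (size_poly _ _)).
  by apply: eq_bigr => i _; rewrite coef_poly ltn_ord rmorph1 mul1r.
(* Peel the window of length k + 1 starting at n from either end. *)
have peel_first : \sum_(i < k.+1) s (n + i%:Z) = s n + \sum_(i < k) s (n + 1 + i%:Z).
  by rewrite big_ord_recl /= addr0; under eq_bigr do rewrite /bump leq0n intS addrA.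
by move: peel_first; rewrite big_ord_recr /= !window0 add0r addr0.
Qed.

End ShiftOperator.

(* Coefficients of a polynomial of size at most m that is divisible by
   phi = ('X^m - 1) / ('X^k - 1) are k-periodic: write g = q * phi, so that
   size q <= k and g * ('X^k - 1) = q * ('X^m - 1), and compare the
   coefficients of degree j + k < m. *)
Lemma coef_periodic_of_dvd (R : fieldType) (m k : nat) (phi g : {poly R}) :
  (0 < k)%N -> ('X^k - 1) * phi = 'X^m - 1 -> phi %| g -> (size g <= m)%N ->
  forall j, (j + k < m)%N -> g`_j = g`_(j + k).
Proof.
move=> k_gt0 split_m /dvdpP[q g_eq] g_le j jk_lt.
have m_gt0 : (0 < m)%N by lia.
have phi_neq0 : phi != 0.
  apply/eqP => phi0; move/(congr1 (size : {poly R} -> nat)): split_m.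
  by rewrite phi0 mulr0 size_poly0 -polyC1 size_XnsubC.
have size_phi : (k + size phi = m.+1)%N.
  move/(congr1 (size : {poly R} -> nat)): split_m.
  rewrite -polyC1 size_mul ?size_XnsubC //.
  by rewrite -size_poly_eq0 size_XnsubC.
have size_q : (size q <= k)%N.
  have [-> | q_neq0] := eqVneq q 0; first by rewrite size_poly0.
  rewrite -(leq_add2r (size phi)) size_phi (leq_trans (leqSpred _)) //.
  by rewrite ltnS -size_mul // -g_eq.
have cross : g * ('X^k - 1) = q * ('X^m - 1).
  by rewrite g_eq -split_m -mulrA (mulrC phi).
move/(congr1 (fun P : {poly R} => P`_(j + k))): cross.
rewrite !mulrBr !mulr1 !coefB !coefMXn ltnNge leq_addl addnK jk_lt /=.
rewrite (nth_default 0 (leq_trans size_q (leq_addl _ _))) subr0.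
by move/eqP; rewrite subr_eq0 => /eqP.
Qed.

Lemma reversed_poly (R : nzRingType) (a : seq R) (m : nat) :
  \sum_(i < m) a`_i *: 'X^(m.-1 - i) = \poly_(i < m) a`_(m.-1 - i).
Proof.
rewrite poly_def (reindex_inj rev_ord_inj); apply: eq_bigr => i _ /=.
by congr (a`_ _ *: 'X^ _); have := ltn_ord i; lia.
Qed.

Theorem mainTheorem9 (F E : fieldType) (emb : {rmorphism F -> E}) (p : nat)
  (M : seq E) (r e : nat) :
  is_char F p ->
  units_subgroup M ->
  prime r -> (0 < e)%N -> size M = (r ^ e)%N ->
  (~ exists f : {poly F}, auto_nonstandard emb p f M) /\
  (forall t : seq E, perm_eq t M ->
     ~ (phi_pm E (size M) %|
          \sum_(i < size M) t`_i *: 'X^((size M).-1 - i))).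
Proof.
move=> _ [M_uniq _ _ _ _] r_pr e_gt0 size_M.
rewrite /auto_nonstandard size_M; set m := (r ^ e)%N; set k := (r ^ e.-1)%N.
have k_gt0 : (0 < k)%N by rewrite expn_gt0 prime_gt0.
have k_lt_m : (k < m)%N by rewrite ltn_exp2l ?prime_gt1 // prednK.
have m_gt0 : (0 < m)%N := ltn_trans k_gt0 k_lt_m.
split.
  case=> f [_ _ f_dvd _ [s [s_f _ s_enum]]].
  rewrite repunit_quotient // in f_dvd.
  have s_k : s k%:Z = s 0.
    by rewrite -[k%:Z]add0r (repunit_period (f_sequence_dvd s_f f_dvd)).
  have := nth_uniq 0 _ _ (etrans (perm_uniq s_enum) M_uniq).
  rewrite size_map size_iota => /(_ 0%N k m_gt0 k_lt_m).
  rewrite !(nth_map 0%N) ?size_iota // nth_iota // nth_iota // !add0n s_k.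
  by rewrite eqxx eq_sym gtn_eqF.
move=> t t_perm /(coef_periodic_of_dvd k_gt0 (esym (Xn_sub_1_prime_power E r_pr e_gt0))).
rewrite reversed_poly => /(_ (size_poly _ _) 0%N k_lt_m).
rewrite !coef_poly add0n k_lt_m m_gt0 subn0.
have := nth_uniq 0 _ _ (etrans (perm_uniq t_perm) M_uniq).
have top_lt : (m.-1 < m)%N by rewrite ltn_predL.
have lt_top : (m.-1 - k < m.-1)%N.
  by rewrite ltn_subrL k_gt0 -ltnS prednK // (leq_ltn_trans k_gt0 k_lt_m).
rewrite (perm_size t_perm) size_M => /(_ _ _ top_lt (ltn_trans lt_top top_lt)).
by rewrite (gtn_eqF lt_top) => t_neq /eqP; rewrite t_neq.
Qed.
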